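(* Let $G=(V,E)$ be a connected undirected graph with $n\ge2$ nodes and let $0\le k<n$. There exists an initial state with exactly $k$ colored nodes for which the expected convergence time of the \textsc{Random Pick} process on $G$ equals $1$ if and only if $G$ has a vertex cover of size $k$.
   Context: An undirected graph is one with $(v,u)\in E\iff(u,v)\in E$. A vertex cover is a set $V'\subseteq V$ containing at least one endpoint of every edge. A state is a map $V\to\{b,r,u\}$ (blue, red, uncolored); colored means blue or red. \textsc{Random Pick} process: in each round every node with at least one neighbor picks a neighbor uniformly at random, independently; an uncolored node adopts the color of its pick if the pick is colored, and all other nodes keep their color. A state is stable if no uncolored node has a colored neighbor; the convergence time is the first round $t\ge0$ at which the state is stable. *)

From HB Require Import structures.
From mathcomp Require Import all_boot all_order all_algebra.
From mathcomp Require Import all_classical all_reals.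
From mathcomp Require Import ereal sequences.

Set Implicit Arguments.
Unset Strict Implicit.
Unset Printing Implicit Defensive.

Import Order.TTheory GRing.Theory Num.Theory.

Inductive color := Blue | Red | Uncolored.

Definition color_eqb (a b : color) : bool :=
  match a, b with
  | Blue, Blue | Red, Red | Uncolored, Uncolored => true
  | _, _ => false
  end.

Lemma color_eqP : Equality.axiom color_eqb.
Proof. by case; case; constructor. Qed.

HB.instance Definition _ := hasDecEq.Build color color_eqP.

Definition colored (c : color) : bool := c != Uncolored.

Section RandomPick.
Variable T : finType.
Variable e : rel T.

Definition state := {ffun T -> color}.

Definition vertex_cover (C : {set T}) : Prop :=
  forall x y, e x y -> (x \in C) || (y \in C).

Definition nbhd (v : T) : {set T} := [set w | e v w].
Definition deg (v : T) : nat := #|nbhd v|.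

Definition stable (s : state) : bool :=
  [forall v, forall w, ~~ [&& s v == Uncolored, e v w & colored (s w)]].

(* One round, given the picks f (f v = neighbour picked by v; for a node with
   no neighbour, which picks nothing, we use the convention f v = v). *)
Definition step (s : state) (f : {ffun T -> T}) : state :=
  [ffun v => if s v == Uncolored then s (f v) else s v].

Definition run (s0 : state) (fs : seq {ffun T -> T}) : state := foldl step s0 fs.

Variable R : realType.
Local Open Scope ring_scope.

(* probability of the pick vector f in one round: every node with at least one
   neighbour picks a neighbour uniformly at random, independently *)
Definition pick_prob (f : {ffun T -> T}) : R :=
  \prod_(v : T)
     (if deg v == 0%N then (if f v == v then 1 else 0)
      else (if e v (f v) then (deg v)%:R^-1 else 0)).

(* P(convergence time > t): the states at rounds 0..t are all unstable *)
Definition prob_conv_time_gt (s0 : state) (t : nat) : R :=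
  \sum_(fs : t.-tuple {ffun T -> T})
     (\prod_(f <- fs) pick_prob f) *
     (if [forall i : 'I_t.+1, ~~ stable (run s0 (take i fs))] then 1 else 0).

(* expected convergence time, E[T] = sum_{t >= 0} P(T > t), in [0, +oo] *)
Definition expected_conv_time (s0 : state) : \bar R :=
  (\sum_(0 <= t <oo) (prob_conv_time_gt s0 t)%:E)%E.

End RandomPick.

From HB Require Import structures.
From mathcomp Require Import all_boot all_order all_algebra.
From mathcomp Require Import all_classical all_reals.
From mathcomp Require Import ereal sequences.
From mathcomp Require Import lra zify.

(* The convergence time is 0 exactly on stable states and is
   otherwise at least 1, so expected time 1 means: the initial state is
   unstable and stabilizes after one round almost surely.  If the colored set
   C is a vertex cover, every uncolored node has only colored neighbours, so
   after one round all nodes are colored.  Conversely, if some edge xy has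
   both ends uncolored, the round in which every uncolored node picks an
   uncolored neighbour whenever it has one (a positive-probability event)
   keeps x uncolored while the colored nodes stay colored; by connectivity
   some uncolored node then has a colored neighbour, so the time exceeds 1
   with positive probability. *)

Set Implicit Arguments.
Unset Strict Implicit.
Unset Printing Implicit Defensive.
Import Order.TTheory GRing.Theory Num.Theory.

Local Open Scope ring_scope.

Lemma connect_edge_out (T : finType) (e : rel T) (A : {set T}) a b :
  a \in A -> b \notin A -> connect e a b ->
  exists u w, [/\ u \in A, w \notin A & e u w].
Proof.
move=> aA bA /connectP[p pth bE]; rewrite {}bE in bA.
elim: p a aA pth bA => [|c p IH] a aA /=; first by rewrite aA.
case/andP=> eac pth bA.
have [cA|cA] := boolP (c \in A); first exact: IH cA pth bA.
by exists a, c.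
Qed.

Section ConnectedGraph.
Variables (T : finType) (e : rel T).
Hypothesis e_connected : forall x y : T, connect e x y.
Hypothesis card_T : (2 <= #|T|)%N.

Lemma exists_nbr (v : T) : exists w, e v w.
Proof.
have [w wv] : exists w, w \notin [set v].
  have : (0 < #|~: [set v]|)%N by rewrite cardsC1; lia.
  by case/card_gt0P=> w; rewrite inE; exists w.
have [u [x [/set1P -> _ ux]]] :=
  connect_edge_out (set11 v) wv (e_connected v w).
by exists x.
Qed.

Lemma deg_neq0 (v : T) : deg e v != 0%N.
Proof.
have [w vw] := exists_nbr v.
by rewrite -lt0n; apply/card_gt0P; exists w; rewrite inE.
Qed.

Variable R : realType.

Lemma pick_prob_ge0 (f : {ffun T -> T}) : 0 <= pick_prob e R f.
Proof.
apply: prodr_ge0 => v _; case: ifP => _; first by case: ifP.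
by case: ifP => // _; rewrite invr_ge0.
Qed.

Lemma pick_prob_neq0_nbr (f : {ffun T -> T}) :
  pick_prob e R f != 0 -> forall v, e v (f v).
Proof.
move=> pf_neq0 v; apply: contraNT pf_neq0 => nvf.
by rewrite /pick_prob (bigD1 v) //= (negbTE (deg_neq0 v)) (negbTE nvf) mul0r.
Qed.

Lemma pick_prob_gt0 (f : {ffun T -> T}) :
  (forall v, e v (f v)) -> 0 < pick_prob e R f.
Proof.
move=> ef; apply: prodr_gt0 => v _; rewrite (negbTE (deg_neq0 v)) ef.
by rewrite invr_gt0 ltr0n lt0n deg_neq0.
Qed.

Lemma prob_conv_time_gt_ge0 (s : state T) t : 0 <= prob_conv_time_gt e R s t.
Proof.
apply: sumr_ge0 => fs _; rewrite mulr_ge0 //; last by case: ifP.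
by apply: prodr_ge0 => g _; exact: pick_prob_ge0.
Qed.

Lemma prob_conv_time_gt0 (s : state T) :
  prob_conv_time_gt e R s 0 = if stable e s then 0 else 1.
Proof.
rewrite /prob_conv_time_gt (big_pred1 [tuple]); last first.
  by move=> fs /=; symmetry; apply/eqP/val_inj/size0nil; rewrite size_tuple.
rewrite big_nil mul1r.
have -> : [forall i : 'I_1, ~~ stable e (run s (take i [tuple]))]
         = ~~ stable e s.
  by apply/forallP/idP => [/(_ ord0) // | ns []].
by case: (stable e s).
Qed.

Lemma prob_conv_time_gt_stable (s : state T) t :
  stable e s -> prob_conv_time_gt e R s t = 0.
Proof.
move=> st; apply: big1 => fs _.
suff -> : [forall i : 'I_t.+1, ~~ stable e (run s (take i fs))] = false.
  by rewrite mulr0.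
by apply/negbTE/forallPn; exists ord0; rewrite /= take0 negbK.
Qed.

Lemma prob_conv_time_gt_succ_eq0 (s : state T) t :
  (forall f : {ffun T -> T}, (forall v, e v (f v)) -> stable e (step s f)) ->
  prob_conv_time_gt e R s t.+1 = 0.
Proof.
move=> step_stable; apply: big1 => fs _.
case/tupleP: fs => f fs /=; rewrite big_cons.
have [->|pf_neq0] := eqVneq (pick_prob e R f) 0; first by rewrite !mul0r.
suff -> : [forall i : 'I_t.+2, ~~ stable e (run s (take i (f :: fs)))] = false.
  by rewrite mulr0.
apply/negbTE/forallPn; exists (Ordinal (isT : (1 < t.+2)%N)).
by rewrite /= take0 negbK; apply: step_stable; exact: pick_prob_neq0_nbr.
Qed.

Lemma prob_conv_time_gt1_gt0 (s : state T) (f : {ffun T -> T}) :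
  (forall v, e v (f v)) ->
  ~~ stable e s -> ~~ stable e (step s f) -> 0 < prob_conv_time_gt e R s 1.
Proof.
move=> ef ns ns1; rewrite /prob_conv_time_gt (bigD1 [tuple f]) //=.
rewrite big_seq1.
have -> : [forall i : 'I_2, ~~ stable e (run s (take i [tuple f]))].
  by apply/forallP => -[[|[|//]] ?].
rewrite mulr1 ltr_wpDr ?pick_prob_gt0 //.
apply: sumr_ge0 => fs _; rewrite mulr_ge0 //; last by case: ifP.
by apply: prodr_ge0 => g _; exact: pick_prob_ge0.
Qed.

Local Open Scope ereal_scope.

Lemma expected_conv_time_stable (s : state T) :
  stable e s -> expected_conv_time e R s = 0.
Proof.
by move=> st; apply: eseries0 => t _ _; rewrite prob_conv_time_gt_stable.
Qed.

Lemma expected_conv_time_ge (s : state T) :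
  (prob_conv_time_gt e R s 0 + prob_conv_time_gt e R s 1)%:E
    <= expected_conv_time e R s.
Proof.
have := nneseries_lim_ge (u_ := fun t => (prob_conv_time_gt e R s t)%:E)
  (P := xpredT) (m := 0%N) 2
  (fun t _ _ => prob_conv_time_gt_ge0 s t : (0 <= _%:E)%E).
by rewrite big_mkord !big_ord_recl big_ord0 /= adde0 -EFinD.
Qed.

Lemma expected_conv_time_one_round (s : state T) :
  ~~ stable e s ->
  (forall f : {ffun T -> T}, (forall v, e v (f v)) -> stable e (step s f)) ->
  expected_conv_time e R s = 1.
Proof.
move=> ns step_stable; rewrite /expected_conv_time (nneseries_split 0 1).
  rewrite add0n eseries0 ?big_nat1 ?prob_conv_time_gt0 ?(negbTE ns) ?adde0 //.
  by move=> [|t] // _ _; rewrite prob_conv_time_gt_succ_eq0.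
by move=> t _; rewrite lee_fin prob_conv_time_gt_ge0.
Qed.

Local Close Scope ereal_scope.

Definition some_nbr (v : T) : T := odflt v [pick w | e v w].

Lemma some_nbrP v : e v (some_nbr v).
Proof.
rewrite /some_nbr; case: pickP => [// | no_nbr]; have [w vw] := exists_nbr v.
by rewrite no_nbr in vw.
Qed.

Definition uncolored_pick (s : state T) : {ffun T -> T} :=
  [ffun v => odflt (some_nbr v)
     [pick w | [&& s v == Uncolored, e v w & s w == Uncolored]]].

Lemma uncolored_pick_nbr (s : state T) v : e v (uncolored_pick s v).
Proof.
by rewrite ffunE; case: pickP => [w /and3P[_ -> _] | _] //; exact: some_nbrP.
Qed.

Lemma step_uncolored_pick_uncolored (s : state T) x y :
  s x = Uncolored -> e x y -> s y = Uncolored ->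
  step s (uncolored_pick s) x = Uncolored.
Proof.
move=> sx exy sy; rewrite ffunE sx eqxx ffunE.
case: pickP => [w /and3P[_ _ /eqP] // | no_pick].
by have := no_pick y; rewrite sx exy sy eqxx.
Qed.

Lemma step_uncolored_pick_unstable (s : state T) x y :
  ~~ stable e s -> s x = Uncolored -> e x y -> s y = Uncolored ->
  ~~ stable e (step s (uncolored_pick s)).
Proof.
move=> ns sx exy sy; set s1 := step s _.
have [b cb] : exists b, colored (s b).
  move/forallPn: ns => [a /forallPn[b]].
  by rewrite negbK => /and3P[_ _ cb]; exists b.
have s1b : s1 b = s b by rewrite ffunE (negbTE cb).
have xU : x \in [set v | s1 v == Uncolored].
  by rewrite inE (step_uncolored_pick_uncolored sx exy sy).
have bU : b \notin [set v | s1 v == Uncolored] by rewrite inE s1b.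
have [u [w [+ + euw]]] := connect_edge_out xU bU (e_connected x b).
rewrite !inE => s1u s1w.
by apply/forallPn; exists u; apply/forallPn; exists w; rewrite negbK s1u euw.
Qed.

Lemma expected_conv_time_eq1_vertex_cover (s : state T) :
  expected_conv_time e R s = 1%E -> vertex_cover e [set v | colored (s v)].
Proof.
move=> E1 x y exy; apply: contraT; rewrite !inE negb_or /colored !negbK.
case/andP=> /eqP sx /eqP sy.
have [st|ns] := boolP (stable e s).
  move: E1; rewrite expected_conv_time_stable // => -[] /eqP.
  by rewrite eq_sym oner_eq0.
have p1 := prob_conv_time_gt1_gt0 (uncolored_pick_nbr s) ns
  (step_uncolored_pick_unstable ns sx exy sy).
have := expected_conv_time_ge s.
by rewrite E1 prob_conv_time_gt0 (negbTE ns) lee_fin; lra.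
Qed.

Definition paint_blue (C : {set T}) : state T :=
  [ffun v => if v \in C then Blue else Uncolored].

Lemma card_paint_blue (C : {set T}) :
  #|[set v | colored (paint_blue C v)]| = #|C|.
Proof. by apply: eq_card => v; rewrite inE ffunE; case: (v \in C). Qed.

Hypothesis e_sym : symmetric e.

Lemma paint_blue_unstable (C : {set T}) a b :
  a \in C -> b \notin C -> ~~ stable e (paint_blue C).
Proof.
move=> aC bC.
have [u [w [uC wC euw]]] := connect_edge_out aC bC (e_connected a b).
apply/forallPn; exists w; apply/forallPn; exists u.
by rewrite negbK !ffunE uC (negbTE wC) e_sym euw.
Qed.

Lemma expected_conv_time_paint_blue (C : {set T}) a b :
  vertex_cover e C -> a \in C -> b \notin C ->
  expected_conv_time e R (paint_blue C) = 1%E.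
Proof.
move=> cover aC bC.
apply: expected_conv_time_one_round (paint_blue_unstable aC bC) _.
move=> f ef; apply/forallP => v; apply/forallP => w; rewrite !ffunE.
case vC: (v \in C) => //=.
by move: (cover v (f v) (ef v)); rewrite vC /= => ->.
Qed.

End ConnectedGraph.

Theorem mainTheorem15 (R : realType) (T : finType) (e : rel T) (k : nat) :
  symmetric e -> irreflexive e -> (forall x y : T, connect e x y) ->
  (2 <= #|T|)%N -> (k < #|T|)%N ->
  ((exists s0 : state T,
      #|[set v | colored (s0 v)]| = k /\
      expected_conv_time e R s0 = 1%E)
   <->
   (exists C : {set T}, #|C| = k /\ vertex_cover e C)).
Proof.
move=> e_sym _ e_con card_T k_lt; split.
  case=> s [<- E1]; exists [set v | colored (s v)]; split => //.
  exact: expected_conv_time_eq1_vertex_cover E1.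
case=> C [cardC cover]; subst k.
exists (paint_blue C); split; first exact: card_paint_blue.
have [v0 _] : exists v0 : T, v0 \in [set: T].
  by apply/card_gt0P; rewrite cardsT; lia.
have [a aC] : exists a, a \in C.
  have [w0 /cover/orP[] inC] := exists_nbr e_con card_T v0;
    by eexists; exact: inC.
have [b bC] : exists b, b \notin C.
  have : (0 < #|~: C|)%N by move: k_lt; rewrite -(cardsC C); lia.
  by case/card_gt0P=> b; rewrite inE; exists b.
exact: expected_conv_time_paint_blue cover aC bC.
Qed.
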